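(* Let $n\ge 1$ be an integer and $p\in\mathbb{R}$ with $p\neq 1$. Let $w$ be the fundamental solution of the $p$-Laplace equation in $\mathbb{R}^n$, i.e. \[w(x)=-c_{n,p}\tfrac{p-1}{p-n}|x|^{\frac{p-n}{p-1}}\ \text{ if } p\neq n,\qquad w(x)=-c_{n,n}\ln|x|\ \text{ if } p=n,\] where $c_{n,p}>0$ is a constant. Let $N\ge1$, $a_1,\dots,a_N>0$, $y_1,\dots,y_N\in\mathbb{R}^n$, and $V(x):=\sum_{i=1}^N a_i w(x-y_i)$. Then, at all points $x\in\mathbb{R}^n\setminus\{y_1,\dots,y_N\}$ where $\nabla V(x)\neq 0$ (so that $\Delta_pV(x)$ is defined), $\Delta_p V(x)$ has one and the same sign, namely: if $n=1$ or $p=2$ or $p+n=2$, then $\Delta_pV=0$; otherwise, $\Delta_pV\le 0$ at all such points when $\frac{(p-2)(p+n-2)}{p-1}>0$, and $\Delta_pV\ge 0$ at all such points when $\frac{(p-2)(p+n-2)}{p-1}<0$.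
   Context: For a function $u$ that is $C^2$ near $x$ with $\nabla u(x)\neq0$, the $p$-Laplacian is $\Delta_p u=\operatorname{div}(|\nabla u|^{p-2}\nabla u)=|\nabla u|^{p-2}\Big((p-2)\frac{\nabla u\,(\mathcal{H}u)\,\nabla u^T}{|\nabla u|^2}+\Delta u\Big)$, where $\mathcal{H}u$ is the Hessian matrix of $u$ and $\nabla u$ is a row vector. *)

From HB Require Import structures.
From mathcomp Require Import all_boot all_order all_algebra.
From mathcomp Require Import all_classical all_reals all_analysis.
Set Implicit Arguments. Unset Strict Implicit. Unset Printing Implicit Defensive.
Import Order.TTheory GRing.Theory Num.Theory.
Import numFieldNormedType.Exports.
Local Open Scope ring_scope.

Definition enorm (R : realType) (n : nat) (x : 'rV[R]_n) : R :=
  Num.sqrt (\sum_(i < n) x ord0 i ^+ 2).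

Definition evec (R : realType) (n : nat) (i : 'I_n) : 'rV[R]_n := delta_mx ord0 i.

Definition grad (R : realType) (n : nat) (f : 'rV[R]_n -> R) (x : 'rV[R]_n) : 'rV[R]_n :=
  \row_(i < n) ('D_(evec R i) f x).

Definition hessian (R : realType) (n : nat) (f : 'rV[R]_n -> R) (x : 'rV[R]_n) : 'M[R]_n :=
  \matrix_(i < n, j < n) ('D_(evec R j) (fun z => 'D_(evec R i) f z) x).

Definition laplacian (R : realType) (n : nat) (f : 'rV[R]_n -> R) (x : 'rV[R]_n) : R :=
  \tr (hessian f x).

(* p-Laplacian at a point where the gradient is nonzero:
   |Du|^(p-2) ((p-2) Du Hu Du^T / |Du|^2 + Delta u) *)
Definition plaplacian (R : realType) (n : nat) (p : R) (f : 'rV[R]_n -> R) (x : 'rV[R]_n) : R :=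
  let g := grad f x in
  (enorm g) `^ (p - 2) *
    ((p - 2) * ((g *m hessian f x *m g^T) ord0 ord0) / (enorm g) ^+ 2 + laplacian f x).

Definition fundsol (R : realType) (n : nat) (p c : R) (x : 'rV[R]_n) : R :=
  if p == n%:R then - c * ln (enorm x)
  else - c * ((p - 1) / (p - n%:R)) * (enorm x) `^ ((p - n%:R) / (p - 1)).

Definition Vpot (R : realType) (n N : nat) (p c : R) (a : 'I_N -> R) (y : 'I_N -> 'rV[R]_n)
  (x : 'rV[R]_n) : R :=
  \sum_(i < N) a i * @fundsol R n p c (x - y i).

From HB Require Import structures.
From mathcomp Require Import all_boot all_order all_algebra.
From mathcomp Require Import all_classical all_reals all_analysis.
From mathcomp Require Import ring lra.
Import Order.TTheory GRing.Theory Num.Theory.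
Import numFieldNormedType.Exports.
Local Open Scope ring_scope.
Set Implicit Arguments. Unset Strict Implicit.

(* Write the fundamental solution as [w x = F (|x|^2)].  With [u_l = x - y_l] and
   [Q_l = |u_l|^2], the Hessian of [V] is [sum_l a_l (2 F'(Q_l) I + 4 F''(Q_l) u_l^T u_l)],
   and the profile satisfies [F''(t) = e F'(t) / t] with [e = -(p+n-2) / (2(p-1))].
   Substituting into the p-Laplacian with any nonzero vector [g] in place of the
   gradient gives
     [|g|^(p-2) k sum_l 2 a_l F'(Q_l) (Q_l |g|^2 - (g.u_l)^2) / (Q_l |g|^2)],
   [k = (p-2)(p+n-2)/(p-1)].  As [F' < 0], each summand is nonpositive by
   Cauchy-Schwarz, and it vanishes when [n = 1]. *)

Section DirectionalDerivative.
Variables (R : realType) (V : normedModType R).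

Lemma derive_alongE (f : V -> R) x v :
  'D_v f x = 'D_1 (fun h : R => f (h *: v + x)) 0.
Proof.
rewrite /derive; set g1 := fun h => h^-1 *: _; set g2 := fun h => h^-1 *: _.
suff -> : g1 = g2 by [].
by rewrite funeqE /g1 /g2 => h /=; rewrite addr0 scale0r add0r [_%:A]mulr1.
Qed.

Lemma is_derive_alongP (f : V -> R) x v df :
  is_derive x v f df <-> is_derive (0 : R) 1 (fun h : R => f (h *: v + x)) df.
Proof.
split=> -[fxv <-]; split; rewrite ?derive_alongE //.
- exact/(derivable1P f x v).
- exact/(derivable1P f x v).
Qed.

Lemma is_derive_comp_real (F : R -> R) (q : V -> R) x v dF dq :
  is_derive x v q dq -> is_derive (q x) 1 F dF -> is_derive x v (F \o q) (dF * dq).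
Proof.
move=> /is_derive_alongP dq_line dF_qx; apply/is_derive_alongP.
apply: (is_derive1_comp (g := fun h : R => q (h *: v + x))) => //.
by rewrite scale0r add0r.
Qed.

Lemma is_derive_mull (f : V -> R) k x v df :
  is_derive x v f df -> is_derive x v (fun z => k * f z) (k * df).
Proof. exact: is_deriveZ. Qed.

Lemma is_derive_sum_fun n (h : 'I_n -> V -> R) x v (dh : 'I_n -> R) :
  (forall i, is_derive x v (h i) (dh i)) ->
  is_derive x v (fun z => \sum_(i < n) h i z) (\sum_(i < n) dh i).
Proof.
move=> dh_h; have := is_derive_sum dh_h.
by rewrite (_ : \sum_(i < n) h i = (fun z => \sum_(i < n) h i z)) // funeqE => z;
  rewrite fct_sumE.
Qed.

End DirectionalDerivative.

Section DotProduct.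
Variables (R : comRingType) (n : nat).
Implicit Types u v w : 'rV[R]_n.

Definition dotr u v : R := \sum_(k < n) u ord0 k * v ord0 k.

Lemma dotrC u v : dotr u v = dotr v u.
Proof. by apply: eq_bigr => k _; rewrite mulrC. Qed.

Lemma dotr_mulmx u v : (u *m v^T) ord0 ord0 = dotr u v.
Proof. by rewrite mxE; apply: eq_bigr => k _; rewrite mxE. Qed.

Lemma dotr_scaleDl a u v w : dotr (a *: u + v) w = a * dotr u w + dotr v w.
Proof.
rewrite /dotr mulr_sumr -big_split; apply: eq_bigr => k _.
by rewrite !mxE mulrDl mulrA.
Qed.

End DotProduct.

Section RealDotProduct.
Variables (R : realType) (n : nat).
Implicit Types u v w y z : 'rV[R]_n.

Lemma dotr_evecr u i : dotr u (evec R i) = u ord0 i.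
Proof.
rewrite /dotr (bigD1 i) //= big1 => [|k ki]; first by rewrite mxE !eqxx mulr1 addr0.
by rewrite mxE eqxx (negbTE ki) mulr0.
Qed.

Lemma dotr_evec (i j : 'I_n) : dotr (evec R i) (evec R j) = (i == j)%:R.
Proof. by rewrite dotr_evecr mxE eqxx eq_sym. Qed.

Lemma dotrr_ge0 u : 0 <= dotr u u.
Proof. by apply: sumr_ge0 => k _; rewrite -expr2 sqr_ge0. Qed.

Lemma dotrr_gt0 u : u != 0 -> 0 < dotr u u.
Proof.
move=> u0; rewrite lt_neqAle dotrr_ge0 andbT eq_sym; apply: contra u0 => /eqP uu0.
apply/eqP/matrixP => i j; rewrite (ord1 i) mxE.
have sq0 : \sum_(k < n) u ord0 k ^+ 2 = 0.
  by rewrite -[RHS]uu0; apply: eq_bigr => k _; rewrite expr2.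
have /eqP := @psumr_eq0P _ _ predT _ (fun k _ => sqr_ge0 (u ord0 k)) sq0 j isT.
by rewrite sqrf_eq0 => /eqP.
Qed.

Lemma enormE u : enorm u = Num.sqrt (dotr u u).
Proof. by congr Num.sqrt; apply: eq_bigr => k _; rewrite expr2. Qed.

Lemma is_derive_dotrBl y w z v :
  is_derive z v (fun x => dotr (x - y) w) (dotr v w).
Proof.
apply/is_derive_alongP.
have -> : (fun h : R => dotr (h *: v + z - y) w) = (fun h => h * dotr v w + dotr (z - y) w).
  by rewrite funeqE => h; rewrite -addrA dotr_scaleDl.
by apply: is_derive_eq; rewrite scaler0 add0r addr0 [_%:A]mulr1.
Qed.

Lemma is_derive_dotrBB y z v :
  is_derive z v (fun x => dotr (x - y) (x - y)) (2 * dotr (z - y) v).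
Proof.
have coord k : is_derive z v (fun x => (x - y) ord0 k) (v ord0 k).
  by rewrite -dotr_evecr; under eq_fun do rewrite -dotr_evecr; exact: is_derive_dotrBl.
apply: is_derive_eq; first exact: is_derive_sum_fun (fun k => is_deriveM (coord k) (coord k)).
by rewrite /dotr mulr_sumr; apply: eq_bigr => k _; rewrite /GRing.scale /=; ring.
Qed.

End RealDotProduct.

Lemma near_neq_all (R : realType) (n N : nat) (y : 'I_N -> 'rV[R]_n) x :
  (forall l, x != y l) -> \forall z \near x, forall l, z != y l.
Proof.
move=> xy; apply: (@filter_forall _ _ (fun l z => z != y l) (nbhs x) _) => l.
have : \forall z \near x, z - y l != 0.
  apply: (@cvgr_neq0 _ _ _ (nbhs x) _ (fun z => z - y l) (x - y l)).
  - exact: cvgB cvg_id (cvg_cst _).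
  - by rewrite subr_eq0.
by apply: filterS => z; rewrite subr_eq0.
Qed.

Section RadialSum.
Variables (R : realType) (n N : nat) (a : 'I_N -> R) (y : 'I_N -> 'rV[R]_n).

Definition radial_sum (F : R -> R) (z : 'rV[R]_n) : R :=
  \sum_(l < N) a l * F (dotr (z - y l) (z - y l)).

Variables (F dF ddF : R -> R).
Hypothesis F_dF : forall t : R, 0 < t -> is_derive t 1 F (dF t).
Hypothesis dF_ddF : forall t : R, 0 < t -> is_derive t 1 dF (ddF t).

Lemma is_derive_radial (G dG : R -> R) l z v :
  (forall t : R, 0 < t -> is_derive t 1 G (dG t)) -> z != y l ->
  is_derive z v (fun x => G (dotr (x - y l) (x - y l)))
    (dG (dotr (z - y l) (z - y l)) * (2 * dotr (z - y l) v)).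
Proof.
move=> G_dG zy; apply: (is_derive_comp_real (is_derive_dotrBB _ _ _)).
by apply: G_dG; rewrite dotrr_gt0 // subr_eq0.
Qed.

Lemma is_derive_radial_sum z v : (forall l, z != y l) ->
  is_derive z v (radial_sum F)
    (\sum_(l < N) a l * (dF (dotr (z - y l) (z - y l)) * (2 * dotr (z - y l) v))).
Proof.
move=> zy; apply: is_derive_sum_fun => l.
exact/is_derive_mull/is_derive_radial.
Qed.

Lemma hessian_radial_sum x : (forall l, x != y l) ->
  hessian (radial_sum F) x =
  \sum_(l < N) ((2 * a l * dF (dotr (x - y l) (x - y l))) *: 1%:M
    + (4 * a l * ddF (dotr (x - y l) (x - y l))) *: ((x - y l)^T *m (x - y l))).
Proof.
move=> xy; apply/matrixP => i j; rewrite mxE summxE.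
pose Q z l := dotr (z - y l) (z - y l).
pose D z := \sum_(l < N) a l * (dF (Q z l) * (2 * dotr (z - y l) (evec R i))).
have near_D : \forall z \near x, 'D_(evec R i) (radial_sum F) z = D z.
  apply: filterS (near_neq_all xy) => z zy.
  by have [_ ->] := is_derive_radial_sum (evec R i) zy.
rewrite (near_eq_derive _ near_D).
suff dD : is_derive x (evec R j) D (\sum_(l < N) a l *
    (dF (Q x l) * (2 * dotr (evec R j) (evec R i))
     + 2 * dotr (x - y l) (evec R i) * (ddF (Q x l) * (2 * dotr (x - y l) (evec R j))))).
  rewrite derive_val; apply: eq_bigr => l _.
  by rewrite dotr_evec !dotr_evecr !mxE big_ord1 !mxE eq_sym; ring.
apply: is_derive_sum_fun => l; apply: is_derive_mull; apply: is_deriveM.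
- exact: is_derive_radial.
- exact/is_derive_mull/is_derive_dotrBl.
Qed.

End RadialSum.

Section RadialHessianAlgebra.
Variables (R : comRingType) (n N : nat) (al be : 'I_N -> R) (u : 'I_N -> 'rV[R]_n).

Let H : 'M[R]_n := \sum_(l < N) (al l *: 1%:M + be l *: ((u l)^T *m u l)).

Lemma mxquad_radial (g : 'rV[R]_n) :
  (g *m H *m g^T) ord0 ord0
  = \sum_(l < N) (al l * dotr g g + be l * dotr g (u l) ^+ 2).
Proof.
rewrite /H mulmx_sumr mulmx_suml summxE; apply: eq_bigr => l _.
rewrite mulmxDr mulmxDl -!scalemxAr -!scalemxAl mulmx1 !mulmxA -(mulmxA (g *m _)).
rewrite mxE [(_ *: (g *m _)) _ _]mxE [(_ *: (_ *m _)) _ _]mxE [(_ *m (_ *m _)) _ _]mxE big_ord1.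
by rewrite !dotr_mulmx dotrC expr2.
Qed.

Lemma mxtrace_radial :
  \tr H = \sum_(l < N) (al l * n%:R + be l * dotr (u l) (u l)).
Proof.
rewrite /H raddf_sum; apply: eq_bigr => l _.
rewrite raddfD /= !mxtraceZ mxtrace1 mxtrace_mulC /mxtrace big_ord1.
by rewrite dotr_mulmx.
Qed.

End RadialHessianAlgebra.

Lemma dotr_Lagrange (R : comRingType) n (u v : 'rV[R]_n) :
  \sum_(i < n) \sum_(j < n) (u ord0 i * v ord0 j - u ord0 j * v ord0 i) ^+ 2
  = 2 * (dotr u u * dotr v v - dotr u v ^+ 2).
Proof.
have prod_sum (f h : 'I_n -> R) : (\sum_i f i) * (\sum_j h j) = \sum_i \sum_j f i * h j.
  by rewrite mulr_suml; apply: eq_bigr => i _; rewrite mulr_sumr.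
pose uu i := u ord0 i * u ord0 i; pose vv i := v ord0 i * v ord0 i.
pose uv i := u ord0 i * v ord0 i.
have expand i j : (u ord0 i * v ord0 j - u ord0 j * v ord0 i) ^+ 2
    = uu i * vv j + uu j * vv i - 2 * (uv i * uv j).
  by rewrite /uu /vv /uv; ring.
under eq_bigr => i _ do under eq_bigr => j _ do rewrite expand.
under eq_bigr => i _ do rewrite sumrB big_split /=.
rewrite sumrB big_split /= [X in _ + X - _]exchange_big /=.
rewrite /dotr expr2 !prod_sum -/uu -/vv -/uv.
under [X in _ - X]eq_bigr => i _ do rewrite -mulr_sumr.
by rewrite -mulr_sumr; ring.
Qed.

Lemma dotr_Cauchy_Schwarz (R : realFieldType) n (u v : 'rV[R]_n) :
  dotr u v ^+ 2 <= dotr u u * dotr v v.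
Proof.
have : 0 <= 2 * (dotr u u * dotr v v - dotr u v ^+ 2).
  by rewrite -dotr_Lagrange; do 2 apply: sumr_ge0 => ? _; exact: sqr_ge0.
by rewrite pmulr_rge0 // subr_ge0.
Qed.

Lemma dotr_Cauchy_Schwarz_rV1 (R : comRingType) (u v : 'rV[R]_1) :
  dotr u v ^+ 2 = dotr u u * dotr v v.
Proof. by rewrite /dotr !big_ord1; ring. Qed.

Lemma radial_plaplacian_factor (R : fieldType) (n N : nat) (p G : R)
    (al be Q s : 'I_N -> R) :
  p != 1 -> G != 0 -> (forall l, Q l != 0) ->
  (forall l, be l = - (p + n%:R - 2) / (p - 1) * al l / Q l) ->
  (p - 2) * (\sum_(l < N) (al l * G + be l * s l ^+ 2)) / G
    + \sum_(l < N) (al l * n%:R + be l * Q l)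
  = (p - 2) * (p + n%:R - 2) / (p - 1) *
    \sum_(l < N) al l * (Q l * G - s l ^+ 2) / (Q l * G).
Proof.
move=> p1 G0 Q0 beE; have p10 : p - 1 != 0 by rewrite subr_eq0.
rewrite mulr_sumr mulr_suml -big_split mulr_sumr; apply: eq_bigr => l _ /=.
by rewrite beE; field; rewrite Q0 G0 p10.
Qed.

Lemma radial_factor_le0 (R : realFieldType) (N : nat) (G : R) (al Q s : 'I_N -> R) :
  (forall l, al l <= 0) -> 0 < G -> (forall l, 0 < Q l) ->
  (forall l, s l ^+ 2 <= Q l * G) ->
  \sum_(l < N) al l * (Q l * G - s l ^+ 2) / (Q l * G) <= 0.
Proof.
move=> al_le0 G_gt0 Q_gt0 CS; apply: sumr_le0 => l _.
rewrite -mulrA mulr_le0_ge0 // divr_ge0 ?subr_ge0 //.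
by rewrite ltW // mulr_gt0.
Qed.

Lemma plaplacian_radial_hessian (R : realType) (n N : nat) (p : R)
    (f : 'rV[R]_n -> R) x (al be : 'I_N -> R) (u : 'I_N -> 'rV[R]_n) :
  hessian f x = \sum_(l < N) (al l *: 1%:M + be l *: ((u l)^T *m u l)) ->
  let g := grad f x in
  plaplacian p f x = enorm g `^ (p - 2) *
    ((p - 2) * (\sum_(l < N) (al l * dotr g g + be l * dotr g (u l) ^+ 2)) / dotr g g
     + \sum_(l < N) (al l * n%:R + be l * dotr (u l) (u l))).
Proof.
move=> hH g; rewrite /plaplacian /laplacian -/g hH mxquad_radial mxtrace_radial.
by rewrite [in X in _ / X]enormE sqr_sqrtr ?dotrr_ge0.
Qed.

Section FundamentalSolutionProfile.
Variables (R : realType) (n : nat) (p c : R).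

Definition fundsol_sqr (t : R) : R :=
  if p == n%:R then - c / 2 * ln t
  else - c * ((p - 1) / (p - n%:R)) * t `^ ((p - n%:R) / (p - 1) / 2).

Definition fundsol_exp : R := - (p + n%:R - 2) / (2 * (p - 1)).

Definition dfundsol_sqr (t : R) : R := - c / 2 * t `^ fundsol_exp.

Lemma fundsolE (u : 'rV[R]_n) : fundsol p c u = fundsol_sqr (dotr u u).
Proof.
rewrite /fundsol /fundsol_sqr enormE -powR12_sqrt ?dotrr_ge0 //.
case: ifP => _; first by rewrite ln_powR mulrA.
by rewrite -powRrM [_ / 2]mulrC.
Qed.

Lemma is_derive_fundsol_sqr : p != 1 -> forall t : R, 0 < t ->
  is_derive t 1 fundsol_sqr (dfundsol_sqr t).
Proof.
move=> p1 t t0; have p10 : p - 1 != 0 by rewrite subr_eq0.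
rewrite /fundsol_sqr /dfundsol_sqr /fundsol_exp; case: eqVneq => [pn|pn].
  apply: (is_derive_eq (is_derive_mull _ (is_derive1_ln t0))).
  rewrite -pn (_ : - (p + p - 2) / (2 * (p - 1)) = -1); last by field.
  by rewrite powRN powRr1 // ltW.
apply: (is_derive_eq (is_derive_mull _ (is_derive1_powR _ t0))).
have pn0 : p - n%:R != 0 by rewrite subr_eq0.
rewrite (_ : (p - n%:R) / (p - 1) / 2 - 1 = - (p + n%:R - 2) / (2 * (p - 1))).
  by field; rewrite pn0 p10.
by field.
Qed.

Lemma is_derive_dfundsol_sqr : forall t : R, 0 < t ->
  is_derive t 1 dfundsol_sqr (fundsol_exp * dfundsol_sqr t / t).
Proof.
move=> t t0; apply: (is_derive_eq (is_derive_mull _ (is_derive1_powR _ t0))).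
rewrite /dfundsol_sqr powRB ?(gt_eqF t0) ?implybT // powRr1 ?(ltW t0) //.
by field; rewrite gt_eqF.
Qed.

Lemma dfundsol_sqr_lt0 (t : R) : 0 < c -> 0 < t -> dfundsol_sqr t < 0.
Proof.
by move=> c0 t0; have := powR_gt0 fundsol_exp t0; rewrite /dfundsol_sqr; nra.
Qed.

End FundamentalSolutionProfile.

Lemma Vpot_radial_sum (R : realType) (n N : nat) (p c : R) (a : 'I_N -> R)
    (y : 'I_N -> 'rV[R]_n) :
  Vpot p c a y = radial_sum a y (fundsol_sqr n p c).
Proof. by rewrite funeqE => z; apply: eq_bigr => l _; rewrite fundsolE. Qed.

Unset Implicit Arguments. Set Strict Implicit.

Theorem lemma3p1 (R : realType) (n : nat) (p c : R) (N : nat)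
  (a : 'I_N -> R) (y : 'I_N -> 'rV[R]_n) :
  (1 <= n)%N -> p != 1 -> 0 < c -> (0 < N)%N -> (forall i, 0 < a i) ->
  let V := @Vpot R n N p c a y in
  let k := (p - 2) * (p + n%:R - 2) / (p - 1) in
  forall x : 'rV[R]_n, (forall i, x != y i) -> grad V x != 0 ->
    ((n == 1)%N || (p == 2) || (p + n%:R == 2) -> plaplacian p V x = 0) /\
    (~~ ((n == 1)%N || (p == 2) || (p + n%:R == 2)) ->
       (0 < k -> plaplacian p V x <= 0) /\ (k < 0 -> 0 <= plaplacian p V x)).
Proof.
move=> _ p1 c_gt0 _ a_gt0 V k x xy g0; set g := grad V x.
pose u l := x - y l; pose Q l := dotr (u l) (u l); pose G := dotr g g.
pose al l := 2 * a l * dfundsol_sqr n p c (Q l).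
pose be l := 4 * a l * (fundsol_exp n p * dfundsol_sqr n p c (Q l) / Q l).
pose S := \sum_(l < N) al l * (Q l * G - dotr g (u l) ^+ 2) / (Q l * G).
have Q_gt0 l : 0 < Q l by rewrite dotrr_gt0 // subr_eq0.
have G_gt0 : 0 < G by exact: dotrr_gt0.
have plapE : plaplacian p V x = enorm g `^ (p - 2) * (k * S).
  have hH : hessian V x = \sum_(l < N) (al l *: 1%:M + be l *: ((u l)^T *m u l)).
    by rewrite /V Vpot_radial_sum (hessian_radial_sum a (is_derive_fundsol_sqr n c p1)
      (is_derive_dfundsol_sqr n p c) xy).
  rewrite (plaplacian_radial_hessian p hH).
  rewrite (radial_plaplacian_factor _ p1 (lt0r_neq0 G_gt0) (fun l => lt0r_neq0 (Q_gt0 l))) // => l.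
  by rewrite /be /al /fundsol_exp; field; rewrite lt0r_neq0 // subr_eq0.
have S_le0 : S <= 0.
  apply: radial_factor_le0 => // l; last by rewrite mulrC dotr_Cauchy_Schwarz.
  by rewrite ltW // pmulr_rlt0 ?mulr_gt0 // dfundsol_sqr_lt0.
have norm_gt0 : 0 < enorm g `^ (p - 2) by rewrite powR_gt0 // enormE sqrtr_gt0.
split=> [/orP[/orP[/eqP n1|/eqP p2]|/eqP pn2] | _].
- rewrite plapE (_ : S = 0) ?mulr0 // /S; subst n.
  by apply: big1 => l _; rewrite dotr_Cauchy_Schwarz_rV1 [dotr g g * _]mulrC subrr mulr0 mul0r.
- by rewrite plapE /k p2 subrr !mul0r mulr0.
- by rewrite plapE /k pn2 subrr mulr0 !mul0r mulr0.
- split=> [k_gt0 | k_lt0]; rewrite plapE.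
  + by rewrite !pmulr_rle0.
  + by rewrite pmulr_rge0 // nmulr_rge0.
Qed.
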